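(* Suppose that $\alpha_1$ and $\alpha_2$ are the roots of an irreducible quadratic polynomial in $\mathbb{Q}[x]$ such that $0 < \alpha_1 < 1 < \alpha_2$. Then the additive monoid $M_{\alpha_1} = \{f(\alpha_1) \mid f(x) \in \mathbb{N}_0[x,x^{-1}]\}$ is an FFM and, therefore, satisfies the ACCP.
   Context: $\mathbb{N}_0[x,x^{-1}]$ denotes the semiring of Laurent polynomials with coefficients in $\mathbb{N}_0$. A reduced additive monoid $M$ is an FFM (finite factorization monoid) if it is atomic and every nonzero element has only finitely many factorizations (formal sums of atoms, up to order, adding to it), where atoms are nonzero elements not expressible as a sum of two nonzero elements. $M$ satisfies the ACCP if every ascending chain of principal ideals $x_1 + M \subseteq x_2 + M \subseteq \cdots$ eventually stabilizes. *)

From HB Require Import structures.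
From mathcomp Require Import all_boot all_order all_algebra.
From mathcomp Require Import reals.
Set Implicit Arguments. Unset Strict Implicit. Unset Printing Implicit Defensive.
Import Order.TTheory GRing.Theory Num.Theory.
Local Open Scope ring_scope.

(* The evaluation at [a] of the Laurent polynomial with N0 coefficients
   given as a finite multiset [s] of exponents (one entry per monomial x^k,
   repeated according to its coefficient): f(a) = \sum_(k <- s) a^k. *)
Definition laurent_eval (R : unitRingType) (a : R) (s : seq int) : R :=
  \sum_(k <- s) a ^ k.

Definition Mlaurent (R : unitRingType) (a : R) : R -> Prop :=
  fun x => exists s : seq int, x = laurent_eval a s.

Section MonoidNotions.
Variables (R : realType) (M : R -> Prop).

Definition atom (a : R) : Prop :=
  M a /\ a != 0 /\
  ~ (exists b c, M b /\ M c /\ b != 0 /\ c != 0 /\ a = b + c).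

Definition is_factorization (x : R) (s : seq R) : Prop :=
  (forall a, a \in s -> atom a) /\ x = \sum_(a <- s) a.

Definition atomic : Prop :=
  forall x, M x -> x != 0 -> exists s, is_factorization x s.

Definition finitely_many_factorizations (x : R) : Prop :=
  exists L : seq (seq R),
    forall s, is_factorization x s -> exists2 t, t \in L & perm_eq s t.

Definition FFM : Prop :=
  atomic /\ forall x, M x -> x != 0 -> finitely_many_factorizations x.

Definition pideal (x : R) : R -> Prop := fun y => exists m, M m /\ y = x + m.

Definition ACCP : Prop :=
  forall u : nat -> R, (forall n, M (u n)) ->
    (forall n y, pideal (u n) y -> pideal (u n.+1) y) ->
    exists N, forall n, (N <= n)%N -> forall y, pideal (u n) y <-> pideal (u N) y.

End MonoidNotions.

From HB Require Import structures.
From mathcomp Require Import all_boot all_order all_algebra.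
From mathcomp Require Import reals lra zify.
From Stdlib Require Import Classical ClassicalEpsilon.

(* For x = f(a1) in M, the number f(a1) + f(a2) does not depend on the choice of
   f: the numerator of f - g vanishes at a1, so it is divisible by the minimal
   polynomial of a1 and vanishes at a2 too.  This trace is additive on M, and
   each monomial contributes a1^k + a2^k >= 1, so it bounds the length of every
   factorization of x.  Hence M is atomic, and along an ascending chain of
   principal ideals the trace of the generator drops by at least 1 at each strict
   step, which gives the ACCP.  Atoms are monomials a1^k, and a1^k + a2^k <= B
   holds for finitely many k only, so only finitely many atoms occur in the
   factorizations of x. *)

Import Order.TTheory GRing.Theory Num.Theory.
Local Open Scope ring_scope.
Set Implicit Arguments. Unset Strict Implicit.

Section LaurentEval.
Variable R : unitRingType.
Implicit Types (a : R) (s t : seq int).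

Lemma laurent_eval_nil a : laurent_eval a [::] = 0.
Proof. exact: big_nil. Qed.

Lemma laurent_eval_cons a k s : laurent_eval a (k :: s) = a ^ k + laurent_eval a s.
Proof. exact: big_cons. Qed.

Lemma laurent_eval1 a k : laurent_eval a [:: k] = a ^ k.
Proof. exact: big_seq1. Qed.

Lemma laurent_eval_cat a s t :
  laurent_eval a (s ++ t) = laurent_eval a s + laurent_eval a t.
Proof. exact: big_cat. Qed.

Lemma Mlaurent0 a : Mlaurent a 0.
Proof. by exists [::]; rewrite laurent_eval_nil. Qed.

Lemma MlaurentD a x y : Mlaurent a x -> Mlaurent a y -> Mlaurent a (x + y).
Proof. by move=> [s ->] [t ->]; exists (s ++ t); rewrite laurent_eval_cat. Qed.

End LaurentEval.

Lemma laurent_eval_ge0 (R : numDomainType) (a : R) s : 0 < a -> 0 <= laurent_eval a s.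
Proof. by move=> a_gt0; apply: sumr_ge0 => k _; rewrite exprz_ge0 ?ltW. Qed.

Lemma expz_le_laurent_eval (R : numDomainType) (a : R) s k : 0 < a -> k \in s ->
  a ^ k <= laurent_eval a s.
Proof.
move=> a_gt0 s_k; rewrite /laurent_eval (big_rem k s_k) /= lerDl.
exact: laurent_eval_ge0.
Qed.

Lemma dvdp_of_common_root (F K : fieldType) (f : {rmorphism F -> K}) p q (a : K) :
  irreducible_poly p -> root (map_poly f p) a -> root (map_poly f q) a -> p %| q.
Proof.
move=> p_irr pa qa; apply: contraT; rewrite -irreducible_poly_coprime // => pq.
have := coprimep_root (_ : coprimep (map_poly f p) (map_poly f q)) pa.
by rewrite (rootP qa) eqxx; apply; rewrite coprimep_map.
Qed.

Section ConjugateTransfer.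
Variable R : numFieldType.

Definition laurent_numerator (N : nat) (s : seq int) : {poly rat} :=
  \sum_(k <- s) 'X^(absz (k + N)).

Lemma horner_laurent_numerator (a : R) (N : nat) s : a != 0 ->
  (forall k, k \in s -> 0 <= k + N%:Z) ->
  (map_poly ratr (laurent_numerator N s)).[a] = a ^ N%:Z * laurent_eval a s.
Proof.
move=> a_neq0 s_ge; rewrite rmorph_sum horner_sum mulr_sumr big_seq [RHS]big_seq.
apply: eq_bigr => k s_k; rewrite /= map_polyXn hornerXn -expfzDr // [N%:Z + k]addrC.
by rewrite -[in RHS](gez0_abs (s_ge k s_k)).
Qed.

Lemma addz_sum_abs_ge0 s k : k \in s -> 0 <= k + (\sum_(j <- s) `|j|)%N.
Proof. by move=> s_k; rewrite (big_rem k s_k) /=; lia. Qed.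

Lemma laurent_eval_conjugate (p : {poly rat}) (a b : R) s t :
  irreducible_poly p -> root (map_poly ratr p) a -> root (map_poly ratr p) b ->
  a != 0 -> b != 0 ->
  laurent_eval a s = laurent_eval a t -> laurent_eval b s = laurent_eval b t.
Proof.
move=> p_irr pa pb a_neq0 b_neq0 eq_st.
pose N := (\sum_(j <- s ++ t) `|j|)%N.
have s_ge k : k \in s -> 0 <= k + N%:Z.
  by move=> s_k; apply: addz_sum_abs_ge0; rewrite mem_cat s_k.
have t_ge k : k \in t -> 0 <= k + N%:Z.
  by move=> t_k; apply: addz_sum_abs_ge0; rewrite mem_cat t_k orbT.
pose g := laurent_numerator N s - laurent_numerator N t.
have g_eval (c : R) : c != 0 ->
    (map_poly ratr g).[c] = c ^ N%:Z * (laurent_eval c s - laurent_eval c t).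
  by move=> c_neq0; rewrite /g rmorphB hornerD hornerN !horner_laurent_numerator // mulrBr.
have p_dvd_g : p %| g.
  apply: (@dvdp_of_common_root _ _ ratr _ _ a p_irr pa).
  by rewrite /root g_eval // eq_st subrr mulr0.
have : root (map_poly ratr g) b by apply: root_dvdp pb; rewrite dvdp_map.
by rewrite /root g_eval // mulf_eq0 expfz_eq0 (negbTE b_neq0) andbF subr_eq0 => /eqP.
Qed.

End ConjugateTransfer.

Lemma atom_Mlaurent (R : realType) (a x : R) : 0 < a ->
  atom (Mlaurent a) x -> exists k, x = a ^ k.
Proof.
move=> a_gt0 [[[|k [|j s]] ->] [x_neq0 no_split]].
- by rewrite laurent_eval_nil eqxx in x_neq0.
- by exists k; rewrite laurent_eval1.
have a_k_gt0 := exprz_gt0 k a_gt0.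
have tail_gt0 : 0 < laurent_eval a (j :: s).
  exact: lt_le_trans (exprz_gt0 j a_gt0) (expz_le_laurent_eval _ (mem_head j s)).
exfalso; apply: no_split; exists (a ^ k), (laurent_eval a (j :: s)).
split; first by exists [:: k]; rewrite laurent_eval1.
split; first by eexists.
by rewrite !lt0r_neq0 // laurent_eval_cons; do !split.
Qed.

Fixpoint words_upto (T : Type) (F : seq T) n : seq (seq T) :=
  if n is n'.+1 then [::] :: [seq a :: w | a <- F, w <- words_upto F n']
  else [:: [::]].

Lemma mem_words_upto (T : eqType) (F : seq T) n w :
  all (mem F) w -> (size w <= n)%N -> w \in words_upto F n.
Proof.
elim: n w => [|n IH] [|a w] //=; rewrite ?inE ?eqxx // => /andP[F_a F_w] w_n.
by rewrite (allpairs_f (fun a w => a :: w) F_a (IH w F_w w_n)) orbT.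
Qed.

Lemma finitely_many_factorizations_bounded (R : realType) (M : R -> Prop) x
    (F : seq R) n :
  (forall s, is_factorization M x s -> all (mem F) s /\ (size s <= n)%N) ->
  finitely_many_factorizations M x.
Proof.
by move=> bnd; exists (words_upto F n) => s /bnd[F_s s_n]; exists s; rewrite ?mem_words_upto.
Qed.

Lemma eventually_constant_of_descent (R : archiRealDomainType) (T : Type)
    (u : nat -> T) (v : nat -> R) :
  (forall n, 0 <= v n) -> (forall n, v n.+1 <= v n) ->
  (forall n, u n.+1 <> u n -> v n.+1 <= v n - 1) ->
  exists N, forall n, (N <= n)%N -> u n = u N.
Proof.
move=> v_ge0 v_dec v_drop.
have v_le n k : v (n + k)%N <= v n.
  by elim: k => [|k IH]; rewrite ?addn0 // addnS (le_trans (v_dec _)).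
suff ind j n : v n < j%:R -> exists N, forall m, (N <= m)%N -> u m = u N.
  exact: ind _ 0%N (archi_boundP (v_ge0 0%N)).
elim: j n => [|j IH] n vn; first by have := v_ge0 n; lra.
have [[k jump]|no_jump] := classic (exists k, u (n + k).+1 <> u (n + k)).
  apply: (IH (n + k).+1); move: vn; rewrite -natr1.
  by have := v_drop _ jump; have := v_le n k; lra.
exists n => m /subnKC <-; elim: (m - n)%N => [|k IHk]; first by rewrite addn0.
by rewrite addnS -IHk; apply: NNPP => jump; apply: no_jump; exists k.
Qed.

Section TraceBoundedMonoid.
Variables (R : realType) (M : R -> Prop) (tr : R -> R).
Hypotheses (M0 : M 0) (MD : forall x y, M x -> M y -> M (x + y)).
Hypothesis trD : forall x y, M x -> M y -> tr (x + y) = tr x + tr y.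
Hypothesis tr_ge1 : forall x, M x -> x != 0 -> 1 <= tr x.

Lemma trace0 : tr 0 = 0.
Proof. by have := trD M0 M0; rewrite addr0; lra. Qed.

Lemma trace_ge0 x : M x -> 0 <= tr x.
Proof.
have [-> _|x_neq0 Mx] := eqVneq x 0; first by rewrite trace0.
by have := tr_ge1 Mx x_neq0; lra.
Qed.

Lemma trace_factorization x s :
  is_factorization M x s -> tr x = \sum_(a <- s) tr a.
Proof.
move=> [s_atoms ->]; elim: s s_atoms => [|a s IH] s_atoms.
  by rewrite !big_nil trace0.
have M_atoms b : b \in a :: s -> M b by case/s_atoms.
have Ma : M a := M_atoms a (mem_head a s).
have Ms : M (\sum_(b <- s) b).
  by rewrite big_seq; apply: big_ind => // b s_b; apply: M_atoms; rewrite in_cons s_b orbT.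
rewrite !big_cons trD // IH // => b s_b.
by apply: s_atoms; rewrite in_cons s_b orbT.
Qed.

Lemma size_factorization_le x s : is_factorization M x s -> (size s)%:R <= tr x.
Proof.
move=> fs; rewrite (trace_factorization fs) -sum1_size natr_sum big_seq [leRHS]big_seq.
by apply: ler_sum => a s_a; have [Ma [a_neq0 _]] := fs.1 a s_a; apply: tr_ge1.
Qed.

Lemma trace_factor_le x s a : is_factorization M x s -> a \in s -> tr a <= tr x.
Proof.
move=> fs s_a; rewrite (trace_factorization fs) (big_rem a s_a) /= lerDl big_seq.
by apply: sumr_ge0 => b /mem_rem s_b; have [Mb _] := fs.1 b s_b; apply: trace_ge0.
Qed.

Lemma atomic_of_trace : atomic M.
Proof.
suff ind n x : M x -> x != 0 -> tr x < n%:R -> exists s, is_factorization M x s.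
  by move=> x Mx x_neq0; apply: ind Mx x_neq0 (archi_boundP (trace_ge0 Mx)).
elim: n x => [|n IH] x Mx x_neq0 tr_x; first by have := tr_ge1 Mx x_neq0; lra.
have [x_atom|x_not_atom] := classic (atom M x).
  by exists [:: x]; split => [a|]; rewrite ?big_seq1 // inE => /eqP ->.
have [b [c [Mb [Mc [b_neq0 [c_neq0 x_bc]]]]]] :
    exists b c, M b /\ M c /\ b != 0 /\ c != 0 /\ x = b + c.
  by apply: NNPP => no_split; apply: x_not_atom.
move: tr_x; rewrite x_bc trD // -natr1 => tr_x.
have := tr_ge1 Mb b_neq0; have := tr_ge1 Mc c_neq0 => tr_c tr_b.
have [sb [sb_atoms ->]] : exists sb, is_factorization M b sb by apply: IH => //; lra.
have [sc [sc_atoms ->]] : exists sc, is_factorization M c sc by apply: IH => //; lra.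
exists (sb ++ sc); split; last by rewrite big_cat.
by move=> a; rewrite mem_cat => /orP[/sb_atoms|/sc_atoms].
Qed.

Lemma ACCP_of_trace : ACCP M.
Proof.
move=> u Mu u_chain.
have step n : exists2 m, M m & u n = u n.+1 + m.
  have [m [Mm u_n]] : pideal M (u n.+1) (u n) by apply: u_chain; exists 0; rewrite addr0.
  by exists m.
have [N u_const] : exists N, forall n, (N <= n)%N -> u n = u N.
  apply: (@eventually_constant_of_descent _ _ u (tr \o u)) => [n|n|n u_jump] /=.
  - exact: trace_ge0.
  - by have [m Mm ->] := step n; rewrite trD //; have := trace_ge0 Mm; lra.
  have [m Mm u_n] := step n; rewrite u_n trD //.
  have m_neq0 : m != 0 by apply/eqP => m0; apply: u_jump; rewrite u_n m0 addr0.
  by have := tr_ge1 Mm m_neq0; lra.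
by exists N => n N_n y; rewrite u_const.
Qed.

Hypothesis bounded_atoms_finite :
  forall B, exists F : seq R, forall a, atom M a -> tr a <= B -> a \in F.

Lemma FFM_of_trace : FFM M.
Proof.
split=> [|x Mx _]; first exact: atomic_of_trace.
have [F F_atoms] := bounded_atoms_finite (tr x).
apply: (@finitely_many_factorizations_bounded _ _ _ F (Num.Def.archi_bound (tr x))).
move=> s fs; split.
  by apply/allP => a s_a; apply: F_atoms (fs.1 a s_a) (trace_factor_le fs s_a).
rewrite ltnW // -(ltr_nat R).
exact: le_lt_trans (size_factorization_le fs) (archi_boundP (trace_ge0 Mx)).
Qed.

End TraceBoundedMonoid.

Lemma bernoulli_le_exprn (R : realDomainType) (x : R) n :
  0 <= x -> 1 + n%:R * (x - 1) <= x ^+ n.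
Proof.
move=> x_ge0; elim: n => [|n IH]; first by rewrite mul0r addr0 expr0.
rewrite exprS -natr1.
have : 0 <= x * (x ^+ n - (1 + n%:R * (x - 1))) by rewrite mulr_ge0 // subr_ge0.
have : 0 <= n%:R * ((x - 1) * (x - 1)) by rewrite mulr_ge0 // -expr2 sqr_ge0.
nra.
Qed.

Lemma exprn_bounded_exponents (R : archiRealFieldType) (b B : R) :
  1 < b -> exists K, forall n, b ^+ n <= B -> (n < K)%N.
Proof.
move=> b_gt1; exists (Num.Def.archi_bound (`|B| / (b - 1))) => n b_n.
rewrite -(ltr_nat R); apply: le_lt_trans (archi_boundP _); last first.
  by rewrite divr_ge0 // subr_ge0 ltW.
rewrite ler_pdivlMr ?subr_gt0 //.
have := bernoulli_le_exprn n (ltW (lt_trans ltr01 b_gt1)); have := ler_norm B; lra.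
Qed.

Section LaurentTrace.
Variables (R : realType) (a1 a2 : R).
Hypotheses (a1_gt0 : 0 < a1) (a1_lt1 : a1 < 1) (a2_gt1 : 1 < a2).
Hypothesis conjugate : forall s t,
  laurent_eval a1 s = laurent_eval a1 t -> laurent_eval a2 s = laurent_eval a2 t.

(* For x = f(a1) this is f(a1) + f(a2), the trace of x over Q; [conjugate]
   makes it independent of the choice of f. *)
Definition laurent_trace (x : R) : R :=
  x + laurent_eval a2 (epsilon (inhabits [::]) (fun s => x = laurent_eval a1 s)).

Lemma laurent_traceE s :
  laurent_trace (laurent_eval a1 s) = laurent_eval a1 s + laurent_eval a2 s.
Proof.
congr (_ + _); apply: conjugate; symmetry.
by apply: (epsilon_spec (inhabits [::]) (fun t => _ = laurent_eval a1 t)); exists s.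
Qed.

Lemma laurent_traceD x y : Mlaurent a1 x -> Mlaurent a1 y ->
  laurent_trace (x + y) = laurent_trace x + laurent_trace y.
Proof.
move=> [s ->] [t ->].
by rewrite -laurent_eval_cat !laurent_traceE !laurent_eval_cat addrACA.
Qed.

Lemma expz_add_ge1 k : 1 <= a1 ^ k + a2 ^ k.
Proof.
have a2_gt0 : 0 < a2 := lt_trans ltr01 a2_gt1.
case: k => n.
  rewrite -!exprnP; have := exprn_ege1 n (ltW a2_gt1).
  by have := exprn_gt0 n a1_gt0; lra.
have : 1 <= a1^-1 ^+ n.+1 by rewrite exprn_ege1 // invf_ge1 // ltW.
rewrite NegzE -exprz_inv -exprnP; have := exprz_gt0 (- n.+1%:Z) a2_gt0; lra.
Qed.

Lemma size_le_laurent_trace s :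
  (size s)%:R <= laurent_eval a1 s + laurent_eval a2 s.
Proof.
elim: s => [|k s IH]; first by rewrite !laurent_eval_nil addr0.
by rewrite /= !laurent_eval_cons -natr1; have := expz_add_ge1 k; lra.
Qed.

Lemma laurent_trace_ge1 x : Mlaurent a1 x -> x != 0 -> 1 <= laurent_trace x.
Proof.
move=> [[|k s] ->]; first by rewrite laurent_eval_nil eqxx.
by rewrite laurent_traceE => _; apply: le_trans (size_le_laurent_trace _); rewrite ler1n.
Qed.

Lemma laurent_exponents_bounded B :
  exists K, forall k, a1 ^ k + a2 ^ k <= B -> (`|k| < K)%N.
Proof.
have a1V_gt1 : 1 < a1^-1 by rewrite invf_gt1.
have [K1 K1_bnd] := exprn_bounded_exponents B a1V_gt1.
have [K2 K2_bnd] := exprn_bounded_exponents B a2_gt1.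
exists (maxn K1 K2) => -[] n /= bnd; rewrite leq_max; apply/orP.
  right; apply: K2_bnd; move: bnd; rewrite -!exprnP.
  by have := exprn_gt0 n a1_gt0; lra.
left; apply: K1_bnd; move: bnd; rewrite NegzE -exprz_inv -exprnP.
by have := exprz_gt0 (- n.+1%:Z) (lt_trans ltr01 a2_gt1); lra.
Qed.

Lemma laurent_bounded_atoms_finite B : exists F : seq R,
  forall x, atom (Mlaurent a1) x -> laurent_trace x <= B -> x \in F.
Proof.
have [K K_bnd] := laurent_exponents_bounded B.
exists [seq a1 ^ k | k <- [seq Posz i | i <- iota 0 K] ++ [seq Negz i | i <- iota 0 K]].
move=> _ /(atom_Mlaurent a1_gt0)[k ->].
rewrite -laurent_eval1 laurent_traceE !laurent_eval1 => /K_bnd k_lt.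
rewrite map_f // mem_cat; case: k k_lt => n /= n_lt; rewrite map_f ?mem_iota ?orbT //.
exact: ltnW.
Qed.

End LaurentTrace.

Theorem theorem4p7 (R : realType) (p : {poly rat}) (a1 a2 : R) :
  size p = 3%N -> irreducible_poly p ->
  root (map_poly ratr p) a1 -> root (map_poly ratr p) a2 ->
  0 < a1 -> a1 < 1 -> 1 < a2 ->
  FFM (Mlaurent a1) /\ ACCP (Mlaurent a1).
Proof.
(* Only the conjugacy of a1 and a2 matters: the degree of p is irrelevant. *)
move=> _ p_irr p_a1 p_a2 a1_gt0 a1_lt1 a2_gt1.
have a2_gt0 : 0 < a2 := lt_trans ltr01 a2_gt1.
have conj := laurent_eval_conjugate p_irr p_a1 p_a2 (lt0r_neq0 a1_gt0) (lt0r_neq0 a2_gt0).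
have trD := laurent_traceD conj.
have tr_ge1 := laurent_trace_ge1 a1_gt0 a1_lt1 a2_gt1 conj.
split.
  apply: (FFM_of_trace (Mlaurent0 a1) (@MlaurentD _ a1) trD tr_ge1).
  exact: laurent_bounded_atoms_finite.
exact: (ACCP_of_trace (Mlaurent0 a1) trD tr_ge1).
Qed.
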